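(* Let $\rho_2>0$. Let $\{P_t(n)\}_{t\ge0}$, $n\in\mathbb N$, be independent Poisson processes of rate $2\rho_2$; for each $t\ge0$ define $\xi_t(0)=1$, $\xi_t(n+1)=\xi_t(n)+(P_t(n+1)-1)\mathbf 1_{\{n<M_t\}}$, where $M_t=\inf\{n\ge0:\xi_t(n)=0\}\in\mathbb N\cup\{\infty\}$. Let $g_2(s)=\inf\{x\in(0,1): -\log(1-x)/(2\rho_2x)>s\}$ for $s\ge0$. Then $\mathbb P(M_t=\infty)=g_2(t)$ for every $t\ge0$, and $\chi=\inf\{t\ge0: M_t=\infty\}$ is a continuous random variable with distribution function $g_2$. *)

From HB Require Import structures.
From mathcomp Require Import all_boot all_order all_algebra.
From mathcomp Require Import all_classical all_reals all_analysis measurable_realfun.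
Set Implicit Arguments. Unset Strict Implicit. Unset Printing Implicit Defensive.
Import Order.TTheory GRing.Theory Num.Theory.
Local Open Scope classical_set_scope.
Local Open Scope ring_scope.

(* A family X : nat -> R -> T -> nat of independent Poisson processes of rate
   lam on the probability space (T, P):
   - every sample path t |-> X n t w (t >= 0) is a counting path:
     starts at 0, nondecreasing, right-continuous;
   - all the X n t are random variables (events {X n t = k} measurable);
   - finite-dimensional distributions: for all N, all strictly increasing
     times 0 <= tt 0 < tt 1 < ... < tt m and all k, the increments
     X n (tt j.+1) - X n (tt j) (n < N, j < m) are jointly independent
     Poisson(lam * (tt j.+1 - tt j)). *)
Definition indep_poisson_processes {d} {T : measurableType d} {R : realType}
    (P : probability T R) (lam : R) (X : nat -> R -> T -> nat) : Prop :=
  [/\ (forall n w, X n 0 w = 0%N),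
      (forall n w s t, 0 <= s -> s <= t -> (X n s w <= X n t w)%N),
      (forall n w t, 0 <= t -> exists2 e : R, 0 < e &
          forall s, t <= s -> s < t + e -> X n s w = X n t w),
      (forall n t k, 0 <= t -> measurable [set w | X n t w = k]) &
      (forall (N m : nat) (tt : nat -> R) (k : nat -> nat -> nat),
          0 <= tt 0%N -> (forall j, (j < m)%N -> tt j < tt j.+1) ->
          P (\big[setI/setT]_(n < N) \big[setI/setT]_(j < m)
                [set w | X n (tt j.+1) w = (X n (tt j) w + k n j)%N])
          = (\prod_(n < N) \prod_(j < m)
                poisson_pmf (lam * (tt j.+1 - tt j)) (k n j))%:E)].

(* xi_alive Pt n = (xi(n), [n < M]) where xi(0) = 1,
   xi(n+1) = xi(n) + (Pt(n+1) - 1) * 1_{n < M},  M = inf{n : xi(n) = 0}.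
   n < M  iff  xi(m) != 0 for all m <= n. *)
Fixpoint xi_alive (Pt : nat -> nat) (n : nat) : int * bool :=
  match n with
  | 0%N => (1%:Z, true)
  | n'.+1 =>
      let: (x, a) := xi_alive Pt n' in
      let x' := x + ((Pt n)%:Z - 1) * (a%:R) in
      (x', a && (x' != 0))
  end.

Definition xi (Pt : nat -> nat) (n : nat) : int := (xi_alive Pt n).1.

Definition M_infinite (Pt : nat -> nat) : Prop := forall n, xi Pt n != 0.

Definition g2 {R : realType} (rho s : R) : R :=
  inf [set x : R | 0 < x < 1 /\ s < - ln (1 - x) / (2 * rho * x)].

Definition chi {T : Type} {R : realType} (X : nat -> R -> T -> nat) (w : T)
  : \bar R :=
  ereal_inf [set (t%:E)%E | t in [set t : R | 0 <= t /\ M_infinite (fun n => X n t w)]].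

(* For fixed t the P_t(n) are i.i.d. Poisson(lam), lam = 2 rho2 t, and xi_t is the
   random walk with increments P_t(n) - 1 started at 1 and stopped at 0, so M_t < oo
   is the event that this walk hits 0.  The probability q of hitting 0 is the
   increasing limit of the n-step hitting probabilities: the first-step recursion
   bounds them by every fixed point of the generating function y |-> exp (lam (y - 1)),
   and their supermultiplicativity in the starting height gives exp (lam (q - 1)) <= q,
   so q is the least fixed point.  Convexity of the generating function identifies
   {x in ]0, 1[ | -log (1 - x) / (2 rho2 x) > t} with ]1 - q, 1[, whence
   P(M_t = oo) = 1 - q = g2 t.  As the P_t(n) are nondecreasing in t, so is the event
   {M_t = oo}; {chi <= s} is the decreasing intersection of the {M_(s + 1/k) = oo},
   and the continuity of g2 gives the distribution function of chi and the absence
   of atoms. *)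

From HB Require Import structures.
From mathcomp Require Import all_boot all_order all_algebra.
From mathcomp Require Import all_classical all_reals all_analysis measurable_realfun.
From mathcomp Require Import ring lra zify.
Set Implicit Arguments. Unset Strict Implicit. Unset Printing Implicit Defensive.
Import Order.TTheory GRing.Theory Num.Theory.
Import numFieldNormedType.Exports.
Local Open Scope classical_set_scope.
Local Open Scope ring_scope.

Section poisson_pgf.
Context {R : realType}.
Implicit Types lam q y : R.

Definition poisson_pgf lam y := expR (lam * (y - 1)).

Definition least_pgf_fixpoint lam q := [/\ 0 <= q <= 1, poisson_pgf lam q = q &
  forall y, 0 <= y <= 1 -> poisson_pgf lam y = y -> q <= y].

Lemma poisson_pgf_gt0 lam y : 0 < poisson_pgf lam y.
Proof. exact: expR_gt0. Qed.

Lemma poisson_pgf1 lam : poisson_pgf lam 1 = 1.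
Proof. by rewrite /poisson_pgf subrr mulr0 expR0. Qed.

Lemma ler_poisson_pgf lam y y' : 0 <= lam -> y <= y' ->
  poisson_pgf lam y <= poisson_pgf lam y'.
Proof. by move=> lam0 yy'; rewrite ler_expR ler_wpM2l // lerD2r. Qed.

Lemma continuous_poisson_pgf lam : continuous (poisson_pgf lam).
Proof.
move=> z; apply: (@cvg_comp _ _ _ (fun z => lam * (z - 1)) expR).
  by apply: cvgM; [exact: cvg_cst|apply: cvgB; [exact: cvg_id|exact: cvg_cst]].
exact: continuous_expR.
Qed.

Lemma poisson_pgf_fixpoint_below lam y : 0 <= y -> poisson_pgf lam y <= y ->
  exists2 c, 0 <= c <= y & poisson_pgf lam c = c.
Proof.
move=> y0 fy.
have [c] : exists2 c, c \in `[0, y] & poisson_pgf lam c - c = 0.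
  apply: IVT => //; first apply: continuous_subspaceT => z.
    by apply: cvgB; [exact: continuous_poisson_pgf|exact: cvg_id].
  by rewrite /= ge_min le_max subr0 (ltW (poisson_pgf_gt0 _ _)) subr_le0 fy orbT.
by rewrite in_itv /= => c0y /eqP; rewrite subr_eq0 => /eqP; exists c.
Qed.

(* Convexity of the pgf on [q, 1], whose endpoints satisfy pgf <= id. *)
Lemma poisson_pgf_le_id lam q y : poisson_pgf lam q <= q -> q <= y <= 1 ->
  poisson_pgf lam y <= y.
Proof.
move=> fq /andP[qy y1]; have [<- //|neq_qy] := eqVneq q y.
have ltqy : q < y by rewrite lt_neqAle neq_qy.
have q1 : q < 1 by apply: lt_le_trans y1.
set a := (1 - y) / (1 - q).
have a0 : 0 <= a by apply: divr_ge0; rewrite subr_ge0 // ltW.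
have a1 : a <= 1 by rewrite ler_pdivrMr ?subr_gt0 // mul1r lerD2l lerN2 ltW.
have ya : y = a * q + (1 - a) * 1 by rewrite /a; field; rewrite subr_eq0 gt_eqF.
have := convex_expR (Itv01 a0 a1) (lam * (q - 1)) 0; rewrite !convRE /= expR0.
rewrite mulr0 addr0 (_ : a * (lam * (q - 1)) = lam * (y - 1)); last by rewrite ya; ring.
move/le_trans; apply; rewrite [leRHS]ya lerD2r.
by rewrite ler_wpM2l.
Qed.

Lemma lt_poisson_pgf lam q y : least_pgf_fixpoint lam q -> 0 <= y <= 1 ->
  (y < poisson_pgf lam y) = (y < q).
Proof.
move=> [_ fq qmin] /andP[y0 y1]; apply/idP/idP => [|ltyq].
  apply: contraTT; rewrite -!leNgt => qy.
  by apply: (poisson_pgf_le_id (q := q)); rewrite ?fq ?qy.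
rewrite ltNge; apply/negP => /(poisson_pgf_fixpoint_below y0) [c /andP[c0 cy] fc].
have := qmin c _ fc; rewrite c0 (le_trans cy y1) => /(_ isT) qc.
by move: ltyq; rewrite ltNge (le_trans qc cy).
Qed.

Lemma poisson_pgf_le_left lam g : 0 < lam ->
  (forall d, 0 < d -> poisson_pgf lam (g - d) <= g) -> poisson_pgf lam g <= g.
Proof.
move=> lam0 Hleft; rewrite leNgt; apply/negP => gE.
set E := poisson_pgf lam g in gE.
have E0 : 0 < E by exact: poisson_pgf_gt0.
set d := (E - g) / (2 * E * lam).
have d0 : 0 < d by rewrite divr_gt0 ?subr_gt0 // !mulr_gt0.
have Eld : E * (lam * d) = (E - g) / 2 by rewrite /d; field; rewrite !gt_eqF.
(* [pgf (g - d) = E * exp (- lam d) >= E * (1 - lam d) = (E + g) / 2] *)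
have : E * (1 + - lam * d) <= g.
  apply: le_trans (Hleft d d0); rewrite /poisson_pgf.
  rewrite (_ : lam * (g - d - 1) = lam * (g - 1) + - lam * d); last by ring.
  by rewrite expRD ler_pM2l // expR_ge1Dx.
have -> : E * (1 + - lam * d) = E - (E - g) / 2 by rewrite -Eld; ring.
lra.
Qed.

Lemma least_pgf_fixpoint_gt0 lam q : least_pgf_fixpoint lam q -> 0 < q <= 1.
Proof. by move=> [/andP[_ ->] fq _]; rewrite -fq poisson_pgf_gt0. Qed.

Lemma least_pgf_fixpoint_le lam g : 0 <= g -> poisson_pgf lam g <= g ->
  (forall y, 0 <= y -> poisson_pgf lam y = y -> g <= y) -> least_pgf_fixpoint lam g.
Proof.
move=> g0 fg gmin; have g1 : g <= 1 by apply: gmin; rewrite ?poisson_pgf1.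
have [c /andP[c0 cg] fc] := poisson_pgf_fixpoint_below g0 fg.
have cg' : c = g by apply/eqP; rewrite eq_le cg gmin.
rewrite cg' in fc.
by split => [|//|y /andP[y0 _]]; [rewrite g0 g1|apply: gmin].
Qed.

End poisson_pgf.

Section hitting_probabilities.
Context {R : realType} (lam : R).
Hypothesis lam0 : 0 < lam.
Local Open Scope ereal_scope.

Definition poisson_mass j : \bar R := (poisson_pmf lam j)%:E.

Lemma poisson_mass_ge0 j : 0 <= poisson_mass j.
Proof. by rewrite lee_fin poisson_pmf_ge0. Qed.

Lemma poisson_pgf_series (x : R) : (0 <= x)%R ->
  \sum_(j <oo) poisson_mass j * (x ^+ j)%:E = (poisson_pgf lam x)%:E.
Proof.
move=> x0.
under eq_eseriesr => n _.
  rewrite /poisson_mass /poisson_pmf lam0 -EFinM.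
  rewrite (_ : (_ * x ^+ n)%R = expR (- lam) * ((n`!%:R)^-1 * (lam * x) ^+ n))%R;
    last by rewrite exprMn; ring.
  rewrite EFinM; over.
rewrite /= nneseriesZl/=; last first.
  by move=> n _; rewrite lee_fin mulr_ge0 ?invr_ge0// exprn_ge0// mulr_ge0// ltW.
rewrite /poisson_pgf (_ : (lam * (x - 1) = - lam + lam * x)%R); last by ring.
rewrite expRD EFinM; congr (_ * _).
rewrite expRE -EFin_lim; last first.
  by rewrite /pseries -exp_coeffE; apply: is_cvg_series_exp_coeff.
by apply/congr_lim/funext => n/=; rewrite /pseries/= /series/= -sumEFin.
Qed.

Lemma poisson_mass_series : \sum_(j <oo) poisson_mass j = 1.
Proof.
have := poisson_pgf_series (@ler01 R); rewrite poisson_pgf1.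
by under eq_eseriesr do rewrite expr1n mule1.
Qed.

(* For the walk with i.i.d. Poisson(lam) - 1 increments, [hit_prob n k] is the
   probability to reach 0 from k within n steps, [first_hit_prob m a] the
   probability to reach 0 from a for the first time at step m. *)
Fixpoint hit_prob (n k : nat) : \bar R :=
  match n with
  | 0 => if k is 0 then 1 else 0
  | n'.+1 => if k is k'.+1 then \sum_(j <oo) poisson_mass j * hit_prob n' (k' + j) else 1
  end.

Fixpoint first_hit_prob (m a : nat) : \bar R :=
  match m with
  | 0 => if a is 0 then 1 else 0
  | m'.+1 =>
    if a is a'.+1 then \sum_(j <oo) poisson_mass j * first_hit_prob m' (a' + j) else 0
  end.

Lemma hit_prob_ge0 n k : 0 <= hit_prob n k.
Proof.
elim: n k => [|n IH] [|k] //=.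
by apply: nneseries_ge0 => j _ _; rewrite mule_ge0 ?poisson_mass_ge0.
Qed.

Lemma first_hit_prob_ge0 m a : 0 <= first_hit_prob m a.
Proof.
elim: m a => [|m IH] [|a] //=.
by apply: nneseries_ge0 => j _ _; rewrite mule_ge0 ?poisson_mass_ge0.
Qed.

Lemma hit_prob_le1 n k : hit_prob n k <= 1.
Proof.
elim: n k => [|n IH] [|k] //=.
rewrite -poisson_mass_series; apply: lee_nneseries => [j _ _|j _].
  by rewrite mule_ge0 ?poisson_mass_ge0 ?hit_prob_ge0.
by rewrite -[leRHS]mule1 lee_wpmul2l ?poisson_mass_ge0.
Qed.

Lemma hit_prob_fineK n k : (fine (hit_prob n k))%:E = hit_prob n k.
Proof.
rewrite fineK // ge0_fin_numE ?hit_prob_ge0 //.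
by rewrite (le_lt_trans (hit_prob_le1 n k)) // ltry.
Qed.

Lemma hit_prob_n0 n : hit_prob n 0 = 1.
Proof. by case: n. Qed.

Lemma hit_probSS n k :
  hit_prob n.+1 k.+1 = \sum_(j <oo) poisson_mass j * hit_prob n (k + j).
Proof. by []. Qed.

Lemma hit_prob_mono n n' k : (n <= n')%N -> hit_prob n k <= hit_prob n' k.
Proof.
have hit_probS m l : hit_prob m l <= hit_prob m.+1 l.
  elim: m l => [|m IH] [|l] //; rewrite hit_probSS.
    by apply: nneseries_ge0 => j _ _; rewrite mule_ge0 ?poisson_mass_ge0 ?hit_prob_ge0.
  rewrite hit_probSS; apply: lee_nneseries => [j _ _|j _].
    by rewrite mule_ge0 ?poisson_mass_ge0 ?hit_prob_ge0.
  by apply: lee_wpmul2l; [exact: poisson_mass_ge0|exact: IH].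
move=> /subnKC <-; elim: (n' - n)%N => [|d IH]; first by rewrite addn0.
by rewrite addnS (le_trans IH).
Qed.

Lemma hit_prob_le_fixpoint (y : R) n k : (0 <= y)%R -> poisson_pgf lam y = y ->
  hit_prob n k <= (y ^+ k)%:E.
Proof.
move=> y0 fy; elim: n k => [|n IH] [|k] //=; first by rewrite lee_fin exprn_ge0.
apply: (@le_trans _ _ (\sum_(j <oo) (y ^+ k)%:E * (poisson_mass j * (y ^+ j)%:E))).
  apply: lee_nneseries => [j _ _|j _].
    by rewrite mule_ge0 ?poisson_mass_ge0 ?hit_prob_ge0.
  rewrite [leRHS]muleCA -[(y ^+ k)%:E * _]EFinM -exprD.
  by apply: lee_wpmul2l; [exact: poisson_mass_ge0|exact: IH].
rewrite nneseriesZl; last first.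
  by move=> j _; rewrite mule_ge0 ?poisson_mass_ge0 // lee_fin exprn_ge0.
by rewrite poisson_pgf_series // fy -EFinM exprSr.
Qed.

(* First-passage decomposition: to descend by a + b, first descend by a. *)
Lemma hit_prob_first_hit n a b :
  hit_prob n (a + b) = \sum_(m < n.+1) first_hit_prob m a * hit_prob (n - m) b.
Proof.
elim: n a => [|n IH] [|a].
- by rewrite big_ord_recl big_ord0 adde0 /= mul1e.
- by rewrite big_ord_recl big_ord0 adde0 /= mul0e.
- by rewrite big_ord_recl big1 ?adde0 /= ?mul1e // => i _; rewrite mul0e.
rewrite big_ord_recl /= mul0e add0e.
transitivity (\sum_(j <oo) \sum_(i < n.+1)
    poisson_mass j * (first_hit_prob i (a + j) * hit_prob (n - i) b)).
  apply: eq_eseriesr => j _; rewrite addnAC IH ge0_sume_distrr //.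
  by move=> i _; rewrite mule_ge0 ?first_hit_prob_ge0 ?hit_prob_ge0.
rewrite nneseries_sum; last first.
  by move=> i j _; rewrite !mule_ge0 ?poisson_mass_ge0 ?first_hit_prob_ge0 ?hit_prob_ge0.
apply: eq_bigr => i _; rewrite /bump leq0n add1n subSS add0n.
rewrite -hit_prob_fineK muleC -nneseriesZl; last first.
  by move=> j _; rewrite mule_ge0 ?poisson_mass_ge0 ?first_hit_prob_ge0.
by apply: eq_eseriesr => j _; rewrite hit_prob_fineK muleA muleC.
Qed.

Lemma hit_prob_supermul n1 n2 a b :
  hit_prob n1 a * hit_prob n2 b <= hit_prob (n1 + n2) (a + b).
Proof.
have -> : hit_prob n1 a = \sum_(m < n1.+1) first_hit_prob m a.
  rewrite -[a]addn0 hit_prob_first_hit addn0.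
  by apply: eq_bigr => i _; rewrite hit_prob_n0 mule1.
rewrite hit_prob_first_hit ge0_sume_distrl; last by move=> i _; exact: first_hit_prob_ge0.
apply: (@le_trans _ _ (\sum_(m < n1.+1) first_hit_prob m a * hit_prob (n1 + n2 - m) b)).
  apply: lee_sum => i _; rewrite lee_wpmul2l ?first_hit_prob_ge0 // hit_prob_mono //.
  by have := ltn_ord i; lia.
apply: (@lee_sum_nneg_ord R (fun m => first_hit_prob m a * hit_prob (n1 + n2 - m) b) xpredT)
  => //.
  by move=> m _; rewrite mule_ge0 ?first_hit_prob_ge0 ?hit_prob_ge0.
by lia.
Qed.

Lemma hit_prob_pow n j :
  ((fine (hit_prob n 1)) ^+ j)%:E <= hit_prob (j * n) j.
Proof.
elim: j => [|j IH]; first by rewrite expr0 mul0n.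
rewrite mulSn -add1n exprS EFinM hit_prob_fineK.
apply: le_trans (hit_prob_supermul n (j * n) 1 j).
by apply: lee_wpmul2l => //; exact: hit_prob_ge0.
Qed.

Let hit_sup := ereal_sup (range (hit_prob ^~ 1%N)).

(* The first step from 1 leads to height j, from where j * N steps descend
   with probability at least [hit_prob N 1 ^ j]. *)
Lemma poisson_pgf_hit_prob_le_sup N :
  (poisson_pgf lam (fine (hit_prob N 1)))%:E <= hit_sup.
Proof.
rewrite -poisson_pgf_series ?fine_ge0 ?hit_prob_ge0 //.
apply: lime_le.
  apply: is_cvg_nneseries => j _ _.
  by rewrite mule_ge0 ?poisson_mass_ge0 // lee_fin exprn_ge0 ?fine_ge0 ?hit_prob_ge0.
apply: nearW => J.
apply: le_trans _ (ereal_sup_ubound (ex_intro2 _ _ (J * N).+1 I erefl)) => /=.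
apply: le_trans _ (@nneseries_lim_ge R (fun j => poisson_mass j * hit_prob (J * N) (0 + j))
  xpredT 0%N J _); last first.
  by move=> n _ _; rewrite mule_ge0 ?poisson_mass_ge0 ?hit_prob_ge0.
rewrite big_nat_cond [leRHS]big_nat_cond; apply: lee_sum => j /andP[/andP[_ jJ] _].
apply: lee_wpmul2l; first exact: poisson_mass_ge0.
rewrite add0n; apply: le_trans (hit_prob_pow N j) _; apply: hit_prob_mono.
by rewrite leq_mul2r ltnW ?orbT.
Qed.

Lemma hit_prob_sup : exists2 q : R, hit_sup = q%:E & least_pgf_fixpoint lam q.
Proof.
have sup_le y : (0 <= y)%R -> poisson_pgf lam y = y -> hit_sup <= y%:E.
  move=> y0 fy; apply: ge_ereal_sup => _ [n _ <-].
  by have := hit_prob_le_fixpoint n 1 y0 fy; rewrite expr1.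
have sup_ge0 : 0 <= hit_sup.
  by apply: le_trans (hit_prob_ge0 0 1) (ereal_sup_ubound _); exists 0%N.
have sup_fin : hit_sup \is a fin_num.
  rewrite ge0_fin_numE //; apply: le_lt_trans (sup_le 1%R ler01 (poisson_pgf1 _)) _.
  by rewrite ltry.
exists (fine hit_sup); first by rewrite fineK.
apply: least_pgf_fixpoint_le.
- exact: fine_ge0.
- apply: poisson_pgf_le_left => // d d0.
  have [_ [N _ <-]] := ub_ereal_sup_adherent d0 sup_fin.
  rewrite -/hit_sup -hit_prob_fineK => lt_N.
  have le_pgf :
      (poisson_pgf lam (fine hit_sup - d) <= poisson_pgf lam (fine (hit_prob N 1)))%R.
    by apply: ler_poisson_pgf; [exact: ltW|rewrite -lee_fin EFinB fineK // ltW].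
  rewrite -lee_fin fineK //; apply: le_trans (poisson_pgf_hit_prob_le_sup N).
  by rewrite lee_fin.
- by move=> y y0 fy; rewrite -lee_fin fineK // sup_le.
Qed.

End hitting_probabilities.

Section g2_properties.
Context {R : realType} (rho : R).
Hypothesis rho0 : 0 < rho.
Implicit Types s c x : R.

Definition g2_ratio x := - ln (1 - x) / (2 * rho * x).

Definition g2_cut s c := forall x, 0 < x < 1 -> (s < g2_ratio x) = (c < x).

Lemma g2_ratio_gt0 x : 0 < x < 1 -> 0 < g2_ratio x.
Proof.
move=> /andP[x0 x1]; rewrite /g2_ratio divr_gt0 ?mulr_gt0 //.
by rewrite oppr_gt0 ln_lt0 // subr_gt0 x1 ltrBlDr ltrDl x0.
Qed.

Lemma lt_g2_ratio s x : 0 < x < 1 ->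
  (s < g2_ratio x) = (1 - x < poisson_pgf (2 * rho * s) (1 - x)).
Proof.
move=> /andP[x0 x1]; rewrite /g2_ratio ltr_pdivlMr ?mulr_gt0 //.
rewrite /poisson_pgf (_ : 2 * rho * s * (1 - x - 1) = - (s * (2 * rho * x))); last by ring.
rewrite -[in RHS](@lnK _ (1 - x)) ?posrE ?subr_gt0 //.
by rewrite ltr_expR ltrNr.
Qed.

Lemma g2_ratio_eq s x : 0 < x < 1 -> g2_ratio x = s ->
  1 - x = expR (- (2 * rho * s) * x).
Proof.
move=> /andP[x0 x1] <-; rewrite /g2_ratio.
rewrite (_ : - _ * x = ln (1 - x)); last by field; rewrite !gt_eqF.
by rewrite lnK // posrE subr_gt0.
Qed.

(* Three points of an arithmetic progression cannot all solve [1 - x = exp (- a x)]: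
   it would make [1 - x] both geometric and arithmetic along them. *)
Lemma g2_ratio_nonconstant s a b : 0 <= a -> a < b -> b <= 1 ->
  ~ (forall x, a < x < b -> g2_ratio x = s).
Proof.
move=> a0 ab b1 const; set d := (b - a) / 4.
have d0 : 0 < d by rewrite divr_gt0 ?subr_gt0.
have solve k : (0 < k < 4)%N -> 1 - (a + k%:R * d) = expR (- (2 * rho * s) * (a + k%:R * d)).
  move=> /andP[k0 k4]; have kd : 0 < k%:R * d by rewrite mulr_gt0 ?ltr0n.
  have kd4 : k%:R * d < 4 * d by rewrite ltr_pM2r // ltr_nat.
  have ltab : a < a + k%:R * d < b.
    by rewrite ltrDl kd -ltrBrDl (lt_le_trans kd4) // /d mulrC divfK.
  apply: g2_ratio_eq (const _ ltab); move: ltab => /andP[ax xb].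
  by rewrite (le_lt_trans a0 ax) (lt_le_trans xb b1).
have E : (1 - (a + 2%:R * d)) ^+ 2 = (1 - (a + 1%:R * d)) * (1 - (a + 3%:R * d)).
  by rewrite expr2 !solve // -!expRD; congr expR; ring.
have : d * d = (1 - (a + 2%:R * d)) ^+ 2 - (1 - (a + 1%:R * d)) * (1 - (a + 3%:R * d)).
  by ring.
by rewrite E subrr => /eqP; rewrite mulf_eq0 orbb gt_eqF.
Qed.

Lemma g2_cutE s c : 0 <= c < 1 -> g2_cut s c -> g2 rho s = c.
Proof.
move=> /andP[c0 c1] cut; rewrite /g2 -/g2_ratio.
rewrite (_ : [set x | _] = `]c, 1[%classic); first by apply: inf_itv; rewrite bnd_simp.
apply/seteqP; split => x /=; rewrite in_itv /=.
  by move=> [x01 lt_s]; rewrite -cut // lt_s; case/andP: x01.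
move=> /andP[cx x1]; have x01 : 0 < x < 1 by rewrite x1 (le_lt_trans c0 cx).
by rewrite cut.
Qed.

Lemma g2_cut_nonpos s : s <= 0 -> g2_cut s 0.
Proof.
move=> s0 x x01; rewrite (le_lt_trans s0 (g2_ratio_gt0 x01)).
by case/andP: x01.
Qed.

Lemma g2_nonpos s : s <= 0 -> g2 rho s = 0.
Proof. by move=> s0; apply: g2_cutE (g2_cut_nonpos s0); rewrite lexx ltr01. Qed.

Lemma g2_fixpoint s q : 0 < s -> least_pgf_fixpoint (2 * rho * s) q ->
  0 <= 1 - q < 1 /\ g2_cut s (1 - q).
Proof.
move=> s0 qfix; have /andP[q0 q1] := least_pgf_fixpoint_gt0 qfix.
split=> [|x /[dup] x01 /andP[x0 x1]]; first by apply/andP; split; lra.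
rewrite lt_g2_ratio // (lt_poisson_pgf qfix); last by apply/andP; split; lra.
by rewrite ltrBlDl addrC -ltrBlDl.
Qed.

Lemma g2_cut_exists s : exists2 c, 0 <= c < 1 & g2_cut s c.
Proof.
have [s0|s0] := leP s 0; first by exists 0; [rewrite lexx ltr01|exact: g2_cut_nonpos].
have lam0 : 0 < 2 * rho * s by rewrite !mulr_gt0.
by have [q _ /(g2_fixpoint s0) [q01 cut]] := hit_prob_sup lam0; exists (1 - q).
Qed.

Lemma g2_right_cont s e : 0 < e -> exists2 d, 0 < d & g2 rho (s + d) <= g2 rho s + e.
Proof.
move=> e0; have [c /[dup] c01 /andP[c0 c1] cut] := g2_cut_exists s.
rewrite (g2_cutE c01 cut); set m := Num.min e (1 - c).
have m0 : 0 < m by rewrite lt_min e0 subr_gt0.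
have [me mc] : m <= e /\ m <= 1 - c by split; rewrite ge_min lexx ?orbT.
have x01 : 0 < c + m / 2 < 1 by apply/andP; split; lra.
have lt_s : s < g2_ratio (c + m / 2) by rewrite cut //; lra.
exists ((g2_ratio (c + m / 2) - s) / 2); first by rewrite divr_gt0 ?subr_gt0.
have [c' c'01 cut'] := g2_cut_exists (s + (g2_ratio (c + m / 2) - s) / 2).
rewrite (g2_cutE c'01 cut'); have : c' < c + m / 2 by rewrite -cut' //; lra.
lra.
Qed.

Lemma g2_left_cont s e : 0 < s -> 0 < e ->
  exists2 d, 0 < d <= s & g2 rho s - e <= g2 rho (s - d).
Proof.
move=> s0 e0; apply: contrapT => no_d.
have g2_gap d : 0 < d <= s -> g2 rho (s - d) < g2 rho s - e.
  by move=> ds; rewrite ltNge; apply/negP => le_d; apply: no_d; exists d.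
have [c /[dup] c01 /andP[c0 c1] cut] := g2_cut_exists s.
have g2c : g2 rho s = c by exact: g2_cutE.
have ce : 0 < c - e.
  have := g2_gap s; rewrite s0 lexx subrr g2c => /(_ isT); apply: le_lt_trans.
  by rewrite g2_nonpos.
(* On ]c - e, c[ the ratio is pinned to s: [> s] would put x above c, [< s]
   would put it below [g2 (ratio x) < c - e]. *)
suff const x : c - e < x < c -> g2_ratio x = s.
  by apply: (@g2_ratio_nonconstant s (c - e) c _ _ _ const); lra.
move=> /andP[cex xc].
have x01 : 0 < x < 1 by apply/andP; split; lra.
apply/eqP; rewrite eq_le; apply/andP; split; first by rewrite leNgt cut // -leNgt ltW.
rewrite leNgt; apply/negP => lt_xs.
have := g2_gap (s - g2_ratio x); rewrite subKr subr_gt0 lt_xs gerBl ltW ?g2_ratio_gt0 //.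
move=> /(_ isT); have [c' c'01 cut'] := g2_cut_exists (g2_ratio x).
rewrite (g2_cutE c'01 cut') g2c => c'ce.
by have := cut' x x01; rewrite ltxx; lra.
Qed.

End g2_properties.

Section walk.
Variable Pt : nat -> nat.

(* [hits_zero n k i]: the walk started at height k whose j-th step has
   increment [Pt (i + j) - 1] reaches 0 within n steps. *)
Fixpoint hits_zero (n k i : nat) : bool :=
  match n with
  | 0 => k == 0%N
  | n'.+1 => (k == 0%N) || hits_zero n' (k.-1 + Pt i) i.+1
  end.

Lemma hits_zero0 n i : hits_zero n 0 i.
Proof. by case: n. Qed.

Lemma hits_zero_mono n n' k i : (n <= n')%N -> hits_zero n k i -> hits_zero n' k i.
Proof.
have hits_zeroS m l j : hits_zero m l j -> hits_zero m.+1 l j.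
  elim: m l j => [|m IH] l j; first by rewrite /= => ->.
  rewrite [hits_zero m.+1 _ _]/= => /orP [/eqP ->|/IH h]; first exact: hits_zero0.
  by apply/orP; right.
move=> /subnKC <-; elim: (n' - n)%N => [|d IH]; first by rewrite addn0.
by move=> h; rewrite addnS; apply/hits_zeroS/IH.
Qed.

Lemma xi_alive_inv m : let xa := xi_alive Pt m in
  (xa.2 -> exists k, xa.1 = k.+1%:Z) /\ (~~ xa.2 -> xa.1 = 0%R).
Proof.
elim: m => [|m [IH1 IH2]] /=; first by split => // _; exists 0%N.
move: IH1 IH2; case: (xi_alive Pt m) => x [] /= IH1 IH2; last by rewrite IH2 // mulr0 addr0.
have [k ->] := IH1 isT; rewrite mulr1.
by split => [/eqP h|/negPn /eqP //]; exists (k + Pt m.+1 - 1)%N; move: h; lia.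
Qed.

Lemma xi_alive_dead m n : ~~ (xi_alive Pt m).2 -> ~~ (xi_alive Pt (m + n)).2.
Proof.
move=> h; elim: n => [|n IH]; first by rewrite addn0.
by rewrite addnS /=; move: IH; case: (xi_alive Pt (m + n)) => x a /= /negbTE ->.
Qed.

Lemma xi_alive_hits_zero n m k : xi_alive Pt m = (k.+1%:Z, true) ->
  ~~ (xi_alive Pt (m + n)).2 = hits_zero n k.+1 m.+1.
Proof.
elim: n m k => [|n IH] m k h; first by rewrite addn0 h.
rewrite /= addnS -addSn; case E : (k + Pt m.+1)%N => [|k'].
  rewrite hits_zero0; apply: xi_alive_dead => /=; rewrite h /= mulr1.
  by apply/negPn; move: E; lia.
rewrite (IH m.+1 k') //= h /= mulr1.
by have -> : (k.+1%:Z + ((Pt m.+1)%:Z - 1) = k'.+1%:Z)%R by move: E; lia.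
Qed.

Lemma M_infiniteP : M_infinite Pt <-> forall n, ~~ hits_zero n 1 1.
Proof.
have xi0 : xi_alive Pt 0 = (1%:Z, true) by [].
split => Minf n.
  rewrite -(xi_alive_hits_zero n xi0) add0n negbK.
  have [_ dead] := xi_alive_inv n; apply/negPn/negP => /dead.
  by move: (Minf n); rewrite /xi => /eqP.
have := Minf n; rewrite -(xi_alive_hits_zero n xi0) add0n negbK.
by have [alive _] := xi_alive_inv n; rewrite /xi => /alive [k ->].
Qed.

End walk.

Lemma hits_zero_le (Pt Pt' : nat -> nat) n k k' i : (forall l, (Pt l <= Pt' l)%N) ->
  (k <= k')%N -> hits_zero Pt' n k' i -> hits_zero Pt n k i.
Proof.
move=> PP'; elim: n k k' i => [|n IH] k k' i kk' /=.
  by move/eqP => k0; move: kk'; rewrite k0 leqn0.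
case/orP => [/eqP k0|h]; first by move: kk'; rewrite k0 leqn0 => ->.
apply/orP; right; apply: IH h.
by have := PP' i; move: kk'; case: k; case: k' => /=; lia.
Qed.

Section hitting_events.
Context d (T : measurableType d) (R : realType) (P : probability T R).
Context (lam : R) (Y : nat -> T -> nat).
Hypothesis lam0 : 0 < lam.
Hypothesis measurable_Y : forall n k, measurable [set w | Y n w = k].
Hypothesis Y_iid_poisson : forall N (c : nat -> nat),
  P (\big[setI/setT]_(l < N) [set w | Y l w = c l]) =
  (\prod_(l < N) poisson_pmf lam (c l))%:E.

Definition hit_event n k i := [set w | hits_zero (Y ^~ w) n k i].

Definition prefix_event (c : nat -> nat) i :=
  \big[setI/setT]_(l < i) [set w | Y l w = c l].

Lemma measurable_prefix_event c i : measurable (prefix_event c i).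
Proof. by apply: bigsetI_measurable => l _; exact: measurable_Y. Qed.

Lemma hit_eventSS n k i : hit_event n.+1 k.+1 i =
  \bigcup_j ([set w | Y i w = j] `&` hit_event n (k + j) i.+1).
Proof.
apply/seteqP; split => w /=; first by move=> h; exists (Y i w).
by move=> [j _ [<- h]].
Qed.

Lemma measurable_hit_event n k i : measurable (hit_event n k i).
Proof.
elim: n k i => [|n IH] [|k] i.
- by rewrite (_ : hit_event _ _ _ = setT) //; apply/seteqP; split.
- by rewrite (_ : hit_event _ _ _ = set0) //; apply/seteqP; split.
- by rewrite (_ : hit_event _ _ _ = setT) //; apply/seteqP; split => w // _; exact: hits_zero0.
by rewrite hit_eventSS; apply: bigcupT_measurable => j; apply: measurableI.
Qed.

Lemma measurable_prefix_hit_event c i n k i' :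
  measurable (prefix_event c i `&` hit_event n k i').
Proof. exact: measurableI (measurable_prefix_event _ _) (measurable_hit_event _ _ _). Qed.

Lemma M_infinite_event :
  [set w | M_infinite (Y ^~ w)] = ~` \bigcup_n hit_event n 1 1.
Proof.
apply/seteqP; split => w /=; first by move/M_infiniteP => Minf [n _]; apply/negP.
by move=> no_hit; apply/M_infiniteP => n; apply/negP => hn; apply: no_hit; exists n.
Qed.

Lemma measurable_M_infinite : measurable [set w | M_infinite (Y ^~ w)].
Proof.
rewrite M_infinite_event; apply/measurableC/bigcupT_measurable => n.
exact: measurable_hit_event.
Qed.

Local Open Scope ereal_scope.

Lemma prefix_hit_event_prob n k i c : P (prefix_event c i `&` hit_event n k i) =
  (\prod_(l < i) poisson_pmf lam (c l))%:E * hit_prob lam n k.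
Proof.
elim: n k i c => [|n IH] [|k] i c.
- by rewrite (_ : hit_event _ _ _ = setT) ?setIT ?Y_iid_poisson ?mule1 //; apply/seteqP; split.
- by rewrite (_ : hit_event _ _ _ = set0) ?setI0 ?measure0 ?mule0 //; apply/seteqP; split.
- rewrite (_ : hit_event _ _ _ = setT) ?setIT ?Y_iid_poisson ?hit_prob_n0 ?mule1 //.
  by apply/seteqP; split => w // _; exact: hits_zero0.
pose c' j l := if l == i then j else c l.
have c'_prefix j :
    (\prod_(l < i) poisson_pmf lam (c' j l) = \prod_(l < i) poisson_pmf lam (c l))%R.
  by apply: eq_bigr => l _; rewrite /c' (ltn_eqF (ltn_ord l)).
have split_first : prefix_event c i `&` hit_event n.+1 k.+1 i =
    \bigcup_j (prefix_event (c' j) i.+1 `&` hit_event n (k + j) i.+1).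
  rewrite hit_eventSS setI_bigcupr; apply: eq_bigcupr => j _.
  rewrite /prefix_event big_ord_recr /= /c' eqxx -setIA; congr (_ `&` _).
  by apply: eq_bigr => l _; rewrite (ltn_eqF (ltn_ord l)).
rewrite split_first measure_semi_bigcup; first last.
- by apply: bigcupT_measurable => j; exact: measurable_prefix_hit_event.
- move=> j j' _ _ [w [[/= + _] [/= + _]]].
  by rewrite /prefix_event !big_ord_recr /c' /= eqxx => -[_ <-] [_ <-].
- by move=> j; exact: measurable_prefix_hit_event.
under eq_eseriesr => j _.
  rewrite /= IH big_ord_recr /= c'_prefix {1}/c' eqxx EFinM -muleA -/(poisson_mass lam j).
  over.
by rewrite /= nneseriesZl // => j _; rewrite mule_ge0 ?poisson_mass_ge0 ?hit_prob_ge0.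
Qed.

Lemma hit_event_prob n k : P (hit_event n k 1) = hit_prob lam n k.
Proof.
have split_Y0 : hit_event n k 1 = \bigcup_j (prefix_event (fun _ => j) 1 `&` hit_event n k 1).
  apply/seteqP; split => w /=; last by move=> [j _ [_ h]].
  by move=> h; exists (Y 0%N w) => //; split => //; rewrite /prefix_event big_ord1.
rewrite split_Y0 measure_semi_bigcup; first last.
- by apply: bigcupT_measurable => j; exact: measurable_prefix_hit_event.
- move=> j j' _ _ [w [[/= + _] [/= + _]]].
  by rewrite /prefix_event !big_ord1 /= => <- <-.
- by move=> j; exact: measurable_prefix_hit_event.
under eq_eseriesr => j _ do rewrite /= prefix_hit_event_prob big_ord1 muleC.
rewrite -(hit_prob_fineK lam0) nneseriesZl; last by move=> j _; exact: poisson_mass_ge0.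
by rewrite (poisson_mass_series lam0) mule1.
Qed.

Lemma M_infinite_prob : P [set w | M_infinite (Y ^~ w)] =
  1 - ereal_sup (range (hit_prob lam ^~ 1%N)).
Proof.
rewrite M_infinite_event probability_setC; last first.
  by apply: bigcupT_measurable => n; exact: measurable_hit_event.
congr (_ - _).
have mono_hit : nondecreasing_seq (fun n => hit_event n 1 1).
  by move=> n m nm; rewrite subsetEset => w; exact: hits_zero_mono nm.
have := @nondecreasing_cvg_mu _ _ _ P _ (fun n => measurable_hit_event n 1 1)
  (bigcupT_measurable _ (fun n => measurable_hit_event n 1 1)) mono_hit.
rewrite (_ : P \o _ = hit_prob lam ^~ 1%N); last first.
  by apply/funext => n; rewrite /= hit_event_prob.
have cvg_hit := ereal_nondecreasing_cvgn (fun n m => @hit_prob_mono R lam n m 1).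
by move=> cvg_P; exact: cvg_unique cvg_P cvg_hit.
Qed.

End hitting_events.

Section survival.
Context d (T : measurableType d) (R : realType) (P : probability T R).
Context (rho2 : R) (X : nat -> R -> T -> nat).
Hypothesis rho0 : 0 < rho2.
Hypothesis HX : indep_poisson_processes P (2 * rho2) X.

Local Notation survival t := [set w | M_infinite (fun n => X n t w)].

Lemma measurable_X t n k : 0 <= t -> measurable [set w | X n t w = k].
Proof. by case: HX => _ _ _ mX _ t0; exact: mX. Qed.

Lemma X_iid_poisson t N (c : nat -> nat) : 0 < t ->
  P (\big[setI/setT]_(l < N) [set w | X l t w = c l]) =
  (\prod_(l < N) poisson_pmf (2 * rho2 * t) (c l))%:E.
Proof.
move=> t0; case: HX => X0 _ _ _ fdd; pose tt j : R := if j is 0%N then 0 else t.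
rewrite (_ : \big[setI/setT]_(l < N) _ = \big[setI/setT]_(l < N) \big[setI/setT]_(j < 1)
    [set w | X l (tt j.+1) w = (X l (tt j) w + c l)%N]); last first.
  by apply: eq_bigr => l _; rewrite big_ord1; apply/seteqP; split => w; rewrite /= /tt X0.
rewrite (fdd N 1%N tt (fun n _ => c n)) ?lexx // => [|[]//]; congr EFin.
by apply: eq_bigr => l _; rewrite big_ord1 /= subr0.
Qed.

Lemma survival0 : survival 0 = set0.
Proof.
apply/seteqP; split => w //= /M_infiniteP /(_ 1%N) /=.
by case: HX => X0 _ _ _ _; rewrite X0.
Qed.

Lemma measurable_survival t : 0 <= t -> measurable (survival t).
Proof. by move=> t0; apply: measurable_M_infinite => n k; exact: measurable_X. Qed.

Lemma survival_prob t : 0 <= t -> P (survival t) = (g2 rho2 t)%:E.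
Proof.
rewrite le_eqVlt => /predU1P[<-|t0]; first by rewrite survival0 measure0 g2_nonpos.
have lam0 : 0 < 2 * rho2 * t by rewrite !mulr_gt0.
rewrite (M_infinite_prob lam0 (fun n k => measurable_X n k (ltW t0))); last first.
  by move=> N c; exact: X_iid_poisson.
have [q -> /(g2_fixpoint rho0 t0) [q01 cut]] := hit_prob_sup lam0.
by rewrite (g2_cutE q01 cut) EFinB.
Qed.

Lemma survival_mono s t : 0 <= s -> s <= t -> survival s `<=` survival t.
Proof.
move=> s0 st w /M_infiniteP Minf; apply/M_infiniteP => n; apply: contra (Minf n).
by apply: hits_zero_le => // l; case: HX => _ mono _ _ _; exact: mono.
Qed.

Local Open Scope ereal_scope.

Let le_P A B : measurable A -> measurable B -> A `<=` B -> P A <= P B.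
Proof. by move=> mA mB; apply: le_measure; rewrite inE. Qed.

Let P_setD A B : measurable A -> measurable B -> B `<=` A -> P (A `\` B) = P A - P B.
Proof.
move=> mA mB BA; rewrite measureD ?setIidr //.
by rewrite (le_lt_trans (probability_le1 _ mA)) ?ltry.
Qed.

Lemma chi_ge0 w : 0 <= chi X w.
Proof. by apply: le_ereal_inf_tmp => _ [t [t0 _] <-]; rewrite lee_fin. Qed.

Lemma chi_le_survival s w : (0 <= s)%R -> survival s w -> chi X w <= s%:E.
Proof. by move=> s0 h; apply: ereal_inf_lbound; exists s. Qed.

Lemma survival_gt_chi s w : chi X w < s%:E -> survival s w.
Proof.
move=> /ereal_inf_lt [_ [t [t0 surv_t] <-]]; rewrite lte_fin => ts.
exact: survival_mono t0 (ltW ts) _ surv_t.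
Qed.

Lemma chi_le_bigcap s : (0 <= s)%R ->
  [set w | chi X w <= s%:E] = \bigcap_k survival (s + k.+1%:R^-1).
Proof.
move=> s0; apply/seteqP; split => w /=.
  move=> h k _; apply: survival_gt_chi; apply: le_lt_trans h _.
  by rewrite lte_fin ltrDl invr_gt0 ltr0n.
move=> surv; apply/lee_addgt0Pr => e e0.
have [k lt_k] := @ltr_add_invr R s (s + e) ltac:(by rewrite ltrDl).
apply: le_trans (chi_le_survival _ (surv k I)) _.
  by rewrite addr_ge0 // invr_ge0 ler0n.
by rewrite -EFinD lee_fin ltW.
Qed.

Lemma measurable_chi_le s : measurable [set w | chi X w <= s%:E].
Proof.
have [s0|s0] := ltP s 0%R.
  rewrite (_ : [set w | _] = set0) //; apply/seteqP; split => w //= h.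
  by have := le_trans (chi_ge0 w) h; rewrite lee_fin leNgt s0.
rewrite chi_le_bigcap //; apply: bigcapT_measurable => k; apply: measurable_survival.
by rewrite addr_ge0 // invr_ge0 ler0n.
Qed.

Lemma measurable_chi : measurable_fun setT (chi X).
Proof.
apply: (measurability _ (ErealGenOInfty.measurableE R)) => /= _ [_ [r ->] <-].
rewrite setTI (_ : _ @^-1` _ = ~` [set w | chi X w <= r%:E]).
  exact/measurableC/measurable_chi_le.
by apply/seteqP; split => w /=; rewrite in_itv /= andbT ltNge => /negP.
Qed.

Lemma measurable_chi_eq s : measurable [set w | chi X w = s%:E].
Proof. by have := measurable_chi measurableT (emeasurable_set1 s%:E); rewrite setTI. Qed.

Lemma chi_cdf s : (0 <= s)%R -> P [set w | chi X w <= s%:E] = (g2 rho2 s)%:E.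
Proof.
move=> s0; apply/eqP; rewrite eq_le; apply/andP; split; last first.
  rewrite -survival_prob //; apply: le_P (measurable_survival s0) (measurable_chi_le s) _.
  by move=> w; exact: chi_le_survival.
apply/lee_addgt0Pr => e e0; have [r r0 g2r] := g2_right_cont rho0 s e0.
have sr0 : (0 <= s + r)%R by rewrite addr_ge0 // ltW.
apply: le_trans (le_P (measurable_chi_le s) (measurable_survival sr0) _) _.
  by move=> w /= h; apply: survival_gt_chi; apply: le_lt_trans h _; rewrite lte_fin ltrDl.
by rewrite survival_prob // -EFinD lee_fin.
Qed.

Lemma chi_eq_le_cdfB s s' : (0 <= s' < s)%R ->
  P [set w | chi X w = s%:E] <= (g2 rho2 s - g2 rho2 s')%:E.
Proof.
move=> /andP[s'0 s's]; have s0 : (0 <= s)%R by exact: le_trans (ltW s's).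
have sub : [set w | chi X w = s%:E] `<=`
    [set w | chi X w <= s%:E] `\` [set w | chi X w <= s'%:E].
  by move=> w /= ->; split => //; apply/negP; rewrite lee_fin -ltNge.
apply: le_trans (le_P (measurable_chi_eq _) _ sub) _.
  by apply: measurableD; exact: measurable_chi_le.
rewrite (P_setD (measurable_chi_le s) (measurable_chi_le s')) ?chi_cdf ?EFinB //.
by move=> w /= /le_trans; apply; rewrite lee_fin ltW.
Qed.

Lemma chi_atomless s : P [set w | chi X w = s%:E] = 0.
Proof.
have [s0|s0|->] := ltgtP s 0%R.
- rewrite (_ : [set w | _] = set0) ?measure0 //; apply/seteqP; split => w //= h.
  by have := chi_ge0 w; rewrite h lee_fin leNgt s0.
- apply/eqP; rewrite eq_le measure_ge0 andbT; apply/lee_addgt0Pr => e e0.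
  have [r /andP[r0 rs] g2r] := g2_left_cont rho0 s0 e0.
  have s_r : (0 <= s - r < s)%R by apply/andP; split; lra.
  apply: le_trans (chi_eq_le_cdfB s_r) _.
  by rewrite add0e lee_fin; lra.
apply/eqP; rewrite eq_le measure_ge0 andbT.
apply: le_trans (le_P (measurable_chi_eq 0) (measurable_chi_le 0) _) _.
  by move=> w /= ->.
by rewrite chi_cdf // g2_nonpos.
Qed.

End survival.

Unset Implicit Arguments.
Theorem lemma7p1 (d : measure_display) (T : measurableType d) (R : realType)
    (P : probability T R) (rho2 : R) (X : nat -> R -> T -> nat) :
  0 < rho2 ->
  indep_poisson_processes P (2 * rho2) X ->
  (forall t : R, 0 <= t ->
     measurable [set w | M_infinite (fun n => X n t w)] /\
     P [set w | M_infinite (fun n => X n t w)] = (g2 rho2 t)%:E) /\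
  (measurable_fun [set: T] (chi X) /\
   (forall s : R, 0 <= s -> P [set w | (chi X w <= s%:E)%E] = (g2 rho2 s)%:E) /\
   (forall s : R, P [set w | chi X w = s%:E] = 0%E)).
Proof.
move=> rho0 HX; split=> [t t0|].
  by split; [exact (measurable_survival HX t0)|exact (survival_prob rho0 HX t0)].
split; first exact: measurable_chi HX.
by split=> [s s0|s]; [exact (chi_cdf rho0 HX s0)|exact (chi_atomless rho0 HX s)].
Qed.
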